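(* Let $A: E\supseteq D(A)\to E$ be a closed linear operator on a complex Banach space $E$. Assume that all sufficiently large real numbers $\lambda$ belong to $\rho(A)$ and that $\lambda R(\lambda,A)$ is bounded in operator norm as $\lambda\to\infty$. If there exist $\mu_0\in\rho(A)$ and an integer $k\ge1$ such that $R(\mu_0,A)^k$ is compact, then $R(\lambda,A)$ is compact for every $\lambda\in\rho(A)$.
   Context: $R(\lambda,A)=(\lambda-A)^{-1}$ and $\rho(A)$ is the resolvent set. *)

From HB Require Import structures.
From mathcomp Require Import all_boot all_algebra.
From mathcomp Require Import all_classical all_reals all_analysis.
From mathcomp.real_closed Require Import complex.
Import numFieldNormedType.Exports.
Local Open Scope classical_set_scope.
Local Open Scope ring_scope.
Local Open Scope complex_scope.

Section OperatorDefs.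
Context {R : realType} {E : normedModType R[i]}.

(* D is a linear subspace of E and A : D(A) -> E is linear on D
   (values of A outside D are irrelevant). *)
Definition linear_op (D : set E) (A : E -> E) : Prop :=
  [/\ D 0,
      (forall x y, D x -> D y -> D (x + y)),
      (forall (c : R[i]) x, D x -> D (c *: x)),
      (forall x y, D x -> D y -> A (x + y) = A x + A y) &
      (forall (c : R[i]) x, D x -> A (c *: x) = c *: A x)].

Definition closed_operator (D : set E) (A : E -> E) : Prop :=
  linear_op D A /\ closed [set p : E * E | D p.1 /\ p.2 = A p.1].

Definition is_resolvent (D : set E) (A : E -> E) (l : R[i]) (T : E -> E) : Prop :=
  [/\ (forall (a : R[i]) x y, T (a *: x + y) = a *: T x + T y),
      continuous T,
      (forall y, D (T y) /\ l *: T y - A (T y) = y) &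
      (forall x, D x -> T (l *: x - A x) = x)].

Definition resolvent_set (D : set E) (A : E -> E) : set R[i] :=
  [set l | exists T, is_resolvent D A l T].

Definition compact_operator (T : E -> E) : Prop :=
  compact (closure (T @` [set x : E | `|x| <= 1])).

End OperatorDefs.

From HB Require Import structures.
From mathcomp Require Import all_boot all_order all_algebra.
From mathcomp Require Import all_classical all_reals all_analysis.
From mathcomp Require Import ring lra.
From mathcomp.real_closed Require Import complex.
Import numFieldNormedType.Exports.
Import Order.TTheory GRing.Theory Num.Theory.
Local Open Scope classical_set_scope.
Local Open Scope ring_scope.
Local Open Scope complex_scope.
Local Notation Re := complex.Re.

(* Compactness of an operator is handled as total boundedness of the image of
   the unit ball, which is equivalent in a Banach space.  Write T0 = R(mu0, A).
   For real nu -> +oo and y in D(A), nu R(nu, A) y - y = R(nu, A) A y has norm at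
   most M |A y| / nu; since A T0^(j+1) = mu0 T0^(j+1) - T0^j is bounded, the
   operators nu R(nu, A) T0^(j+1) converge in norm to T0^(j+1).  By the resolvent
   identity R(nu, A) T0^(j+1) = T0^(j+2) + (mu0 - nu) R(nu, A) T0^(j+2), which is
   compact once T0^(j+2) is, and norm limits of compact operators are compact.
   Descending from T0^k gives that T0 is compact, and then so is
   R(l, A) = T0 + (mu0 - l) R(l, A) T0 for every l in rho(A). *)

Lemma ge0_complexE {R : realType} (z : R[i]) : 0 <= z -> z = (Re z)%:C.
Proof. by case: z => a b /ger0_Im /= ->. Qed.

Lemma Re_norm_ge0 {R : realType} (a : R[i]) : 0 <= Re `|a|.
Proof. by move: (normr_ge0 a); rewrite lecE /= => /andP[]. Qed.

Lemma ultra_cover_seq {T : Type} {I : eqType} {F : set_system T}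
    {P : I -> set T} {s : seq I} :
  UltraFilter F -> F [set x | exists2 k, k \in s & P k x] ->
  exists2 k, k \in s & F (P k).
Proof.
move=> UF; elim: s => [|k s IHs] Fs.
  by case: (filter_ex Fs) => x [k]; rewrite in_nil.
have [FPk|FnPk] := in_ultra_setVsetC (P k) UF; first by exists k; rewrite ?mem_head.
have [j js FPj] : exists2 j, j \in s & F (P j).
  apply: IHs; apply: filterS (filterI Fs FnPk) => x [[j]].
  by rewrite in_cons => /orP[/eqP-> //|js] Pjx _; exists j.
by exists j; rewrite // in_cons js orbT.
Qed.

Section NormedOperators.
Context {R : realType} {E : normedModType R[i]}.
Implicit Types (T B : E -> E).

(* Norms of a normed R[i]-module are complex numbers with zero imaginary part;
   estimates are carried out on their real parts, in the ordered field R. *)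
Definition rnorm (x : E) : R := Re `|x|.

Lemma norm_rnorm x : `|x| = (rnorm x)%:C.
Proof. exact: ge0_complexE. Qed.

Lemma rnorm_ge0 x : 0 <= rnorm x.
Proof. by move: (normr_ge0 x); rewrite norm_rnorm lecR. Qed.

Lemma ler_rnormD x y : rnorm (x + y) <= rnorm x + rnorm y.
Proof. by move: (ler_normD x y); rewrite !norm_rnorm -rmorphD lecR. Qed.

Lemma rdistC x y : rnorm (x - y) = rnorm (y - x).
Proof. by rewrite /rnorm distrC. Qed.

Lemma rnormN x : rnorm (- x) = rnorm x.
Proof. by rewrite /rnorm normrN. Qed.

Lemma rnormZ (a : R[i]) x : rnorm (a *: x) = Re `|a| * rnorm x.
Proof.
by rewrite /rnorm normrZ (ge0_complexE _ (normr_ge0 a)) norm_rnorm -rmorphM.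
Qed.

Lemma rnormZ_ge0 (c : R) x : 0 <= c -> rnorm (c%:C *: x) = c * rnorm x.
Proof.
by move=> c0; rewrite rnormZ normc_def /= expr0n /= addr0 sqrtr_sqr ger0_norm.
Qed.

Definition totally_bounded (S : set E) := forall e : R, 0 < e ->
  exists s : seq E, forall x, S x -> exists2 c, c \in s & rnorm (x - c) < e.

Lemma compact_closure_totally_bounded (S : set E) :
  compact (closure S) -> totally_bounded S.
Proof.
rewrite compact_cover => cS e e0.
have eC : 0 < e%:C by rewrite ltcR.
have cover_balls : closure S `<=` cover (closure S) (fun c => ball c e%:C).
  by move=> x Sx; exists x => //; exact: ballxx.
have [F _ Fcover] := cS E _ _ (fun c _ => ball_open c _) cover_balls.
exists (finmap.enum_fset F) => x Sx.
have [c cF xc] := Fcover x (subset_closure Sx); exists c; first exact: cF.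
by move: xc; rewrite -ball_normE /ball_ /= norm_rnorm ltcR rdistC.
Qed.

Lemma linear_funB T : linear T -> forall u v, T (u - v) = T u - T v.
Proof.
by move=> lT; exact: (linearB (HB.pack T (GRing.isLinear.Build _ _ _ _ T lT))).
Qed.

Lemma linear_funZ T : linear T -> forall a u, T (a *: u) = a *: T u.
Proof.
by move=> lT; exact: (linearZZ (HB.pack T (GRing.isLinear.Build _ _ _ _ T lT))).
Qed.

Definition norm_bounded T :=
  exists2 C : R, 0 <= C & forall x, rnorm (T x) <= C * rnorm x.

Lemma continuous_linear_norm_bounded T : linear T -> continuous T -> norm_bounded T.
Proof.
move=> lT cT.
pose TL : {linear E -> E} := HB.pack T (GRing.isLinear.Build _ _ _ _ T lT).
have /linear_boundedP/pinfty_ex_gt0[C C0 TC] :=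
  @continuous_linear_bounded _ _ _ 0 TL (cT 0).
rewrite (ge0_complexE _ (ltW C0)) in TC.
exists (Re C) => [|x]; first by rewrite -lecR -ge0_complexE ltW.
by have := TC x; rewrite !norm_rnorm -rmorphM lecR.
Qed.

Lemma norm_bounded_iter T n : norm_bounded T -> norm_bounded (iter n T).
Proof.
move=> [C C0 TC]; exists (C ^+ n) => [|x]; first exact: exprn_ge0.
elim: n => [|n IHn] /=; first by rewrite expr0 mul1r.
by apply: le_trans (TC _) _; rewrite exprS -mulrA ler_wpM2l.
Qed.

Definition totally_bounded_op T := totally_bounded (T @` [set x | rnorm x <= 1]).

Lemma totally_bounded_opD T1 T2 : totally_bounded_op T1 -> totally_bounded_op T2 ->
  totally_bounded_op (T1 \+ T2).
Proof.
move=> tb1 tb2 e e0; have e20 : 0 < e / 2 by rewrite divr_gt0.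
have [s1 hs1] := tb1 _ e20; have [s2 hs2] := tb2 _ e20.
exists [seq c1 + c2 | c1 <- s1, c2 <- s2] => _ [x x1 <-].
have [c1 c1s xc1] := hs1 (T1 x) (ex_intro2 _ _ x x1 erefl).
have [c2 c2s xc2] := hs2 (T2 x) (ex_intro2 _ _ x x1 erefl).
exists (c1 + c2); first exact: allpairs_f.
rewrite /= opprD addrACA; apply: le_lt_trans (ler_rnormD _ _) _; lra.
Qed.

Lemma totally_bounded_op_compl B T : linear B -> norm_bounded B ->
  totally_bounded_op T -> totally_bounded_op (B \o T).
Proof.
move=> lB [C C0 BC] tbT e e0.
have eC0 : 0 < e / (C + 1) by rewrite divr_gt0 // ltr_wpDl.
have [s hs] := tbT _ eC0.
exists [seq B c | c <- s] => _ [x x1 <-].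
have [c cs xc] := hs (T x) (ex_intro2 _ _ x x1 erefl).
exists (B c); first exact: map_f.
rewrite /= -linear_funB //; apply: le_lt_trans (BC _) _.
have eCE : e / (C + 1) * (C + 1) = e by field; lra.
by move: xc (rnorm_ge0 (T x - c)); nra.
Qed.

Lemma totally_bounded_opZ (a : R[i]) T :
  totally_bounded_op T -> totally_bounded_op (a \*: T).
Proof.
apply: (totally_bounded_op_compl (fun y => a *: y)).
  by move=> b x y; rewrite scalerDr !scalerA mulrC.
exists (Re `|a|) => [|x]; last by rewrite rnormZ.
exact: Re_norm_ge0.
Qed.

Lemma totally_bounded_op_approx T :
  (forall e : R, 0 < e -> exists2 S, totally_bounded_op S &
     forall x, rnorm x <= 1 -> rnorm (T x - S x) <= e) ->
  totally_bounded_op T.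
Proof.
move=> approx e e0; have e20 : 0 < e / 2 by rewrite divr_gt0.
have [S tbS TS] := approx _ e20; have [s hs] := tbS _ e20.
exists s => _ [x x1 <-].
have [c cs xc] := hs (S x) (ex_intro2 _ _ x x1 erefl); exists c => //.
rewrite -(subrKA (S x)); apply: le_lt_trans (ler_rnormD _ _) _.
by have := TS x x1; lra.
Qed.

End NormedOperators.

Lemma totally_bounded_compact_closure {R : realType}
    {E : completeNormedModType R[i]} (S : set E) :
  totally_bounded S -> compact (closure S).
Proof.
move=> tbS; rewrite compact_ultra => F UF Fcl.
have cF : cauchy F.
  apply: cauchy_exP => eps eps0.
  have epsE := ge0_complexE _ (ltW eps0); set r := Re eps in epsE.
  have r0 : 0 < r by rewrite -ltcR -epsE.
  have r20 : 0 < r / 2 by rewrite divr_gt0.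
  have r20C : 0 < (r / 2)%:C by rewrite ltcR.
  have [s hs] := tbS _ r20.
  have Fcover : F [set x | exists2 c, c \in s & ball c eps x].
    apply: filterS Fcl => x clx.
    have [y [Sy xy]] := clx _ (nbhsx_ballx x _ r20C).
    have [c cs yc] := hs y Sy; exists c => //.
    move: xy; rewrite -ball_normE /ball_ /= epsE !norm_rnorm !ltcR => xy.
    rewrite -(subrKA y); apply: le_lt_trans (ler_rnormD _ _) _.
    by rewrite (rdistC c) (rdistC y x); lra.
  by have [c _ Fc] := ultra_cover_seq UF Fcover; exists c.
have FF : F --> lim F by exact: cauchy_cvg.
exists (lim F); split=> //.
apply: closed_closure => B /FF FB.
exact: filter_ex (filterI Fcl FB).
Qed.

Lemma compact_operatorE {R : realType} {E : completeNormedModType R[i]}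
    (T : E -> E) :
  compact_operator T <-> totally_bounded_op T.
Proof.
rewrite /compact_operator.
have -> : [set x : E | `|x| <= 1] = [set x | rnorm x <= 1].
  by apply/seteqP; split => x /=; rewrite norm_rnorm lecR.
split; first exact: compact_closure_totally_bounded.
exact: totally_bounded_compact_closure.
Qed.

Section Resolvent.
Context {R : realType} {E : normedModType R[i]} {D : set E} {A : E -> E}.

Lemma resolvent_norm_bounded {l T} : is_resolvent D A l T -> norm_bounded T.
Proof. by case=> lT cT _ _; exact: continuous_linear_norm_bounded. Qed.

Lemma A_resolvent {l T} : is_resolvent D A l T -> forall y, A (T y) = l *: T y - y.
Proof.
case=> _ _ rngT _ y; have [_ Ty] := rngT y.
by rewrite -[A (T y)](subKr (l *: T y)) Ty.
Qed.

Lemma resolvent_A {l T x} : is_resolvent D A l T -> D x -> T (A x) = l *: T x - x.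
Proof.
case=> lT _ _ invT Dx; have := invT x Dx.
rewrite linear_funB // linear_funZ // => Tx.
by rewrite -[T (A x)](subKr (l *: T x)) Tx.
Qed.

Lemma resolvent_eq {a b Ta Tb} : is_resolvent D A a Ta -> is_resolvent D A b Tb ->
  forall y, Tb y = Ta y + (a - b) *: Tb (Ta y).
Proof.
move=> rTa rTb y; have [_ _ /(_ y) [Dz _] _] := rTa; have [lTb _ _ invTb] := rTb.
have := invTb _ Dz; rewrite (A_resolvent rTa).
have -> : b *: Ta y - (a *: Ta y - y) = (b - a) *: Ta y + y.
  by rewrite scalerBl opprB addrCA [RHS]addrC.
rewrite lTb => Tz; rewrite -{1}Tz addrAC -scalerDl.
by rewrite [b - a + _]addrC subrKA subrr scale0r add0r.
Qed.

Lemma totally_bounded_op_resolvent {a b Ta Tb V} :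
  is_resolvent D A a Ta -> is_resolvent D A b Tb ->
  totally_bounded_op (Ta \o V) -> totally_bounded_op (Tb \o V).
Proof.
move=> rTa rTb tbV.
have -> : Tb \o V = (Ta \o V) \+ (a - b) \*: (Tb \o (Ta \o V)).
  by apply/funext => x /=; rewrite (resolvent_eq rTa rTb).
have [lTb _ _ _] := rTb.
apply: totally_bounded_opD => //; apply: totally_bounded_opZ.
exact: totally_bounded_op_compl lTb (resolvent_norm_bounded rTb) tbV.
Qed.

End Resolvent.

Section LargeResolvents.
Context {R : realType} {E : normedModType R[i]} {D : set E} {A : E -> E}.
Context {l0 l1 M : R}.
Hypothesis rho_large : forall l : R, l0 <= l -> resolvent_set D A l%:C.
Hypothesis resolvent_large_bound : forall l : R, l1 <= l -> forall T : E -> E,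
  is_resolvent D A l%:C T -> forall x : E, `|l%:C *: T x| <= M%:C * `|x|.
Context {mu0 : R[i]} {T0 : E -> E}.
Hypothesis T0_resolvent : is_resolvent D A mu0 T0.

Lemma scaled_resolvent_dist {nu : R} {T y} : 0 <= nu -> l1 <= nu ->
  is_resolvent D A nu%:C T -> D y ->
  nu * rnorm (nu%:C *: T y - y) <= M * rnorm (A y).
Proof.
move=> nu0 l1nu rT Dy.
have := resolvent_large_bound nu l1nu T rT (A y).
by rewrite (resolvent_A rT Dy) !norm_rnorm -rmorphM lecR rnormZ_ge0.
Qed.

Lemma totally_bounded_op_iter_pred j :
  totally_bounded_op (iter j.+2 T0) -> totally_bounded_op (iter j.+1 T0).
Proof.
move=> tbT0j2; apply: totally_bounded_op_approx => e e0.
have [C1 C10 hC1] := norm_bounded_iter _ j.+1 (resolvent_norm_bounded T0_resolvent).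
have [C2 C20 hC2] := norm_bounded_iter _ j (resolvent_norm_bounded T0_resolvent).
pose K := Re `|mu0| * C1 + C2.
have K0 : 0 <= K by rewrite addr_ge0 // mulr_ge0 // Re_norm_ge0.
pose nu := Num.max (Num.max l0 l1) 1 + `|M| * K / e.
have MKe0 : 0 <= `|M| * K / e by rewrite divr_ge0 ?mulr_ge0 // ltW.
have max_le_nu : Num.max (Num.max l0 l1) 1 <= nu by rewrite lerDl.
have [l0nu l1nu nu1] : [/\ l0 <= nu, l1 <= nu & 1 <= nu].
  by move: max_le_nu; rewrite !ge_max => /andP[/andP[-> ->] ->].
have MK_le : `|M| * K <= nu * e.
  rewrite mulrDl divfK ?gt_eqF // lerDr mulr_ge0 ?ltW //.
  by rewrite lt_max ltr01 orbT.
have [Tn rTn] := rho_large _ l0nu.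
exists (nu%:C \*: (Tn \o iter j.+1 T0)).
  exact: totally_bounded_opZ (totally_bounded_op_resolvent T0_resolvent rTn tbT0j2).
move=> x x1; set y := iter j.+1 T0 x.
have [_ _ /(_ (iter j T0 x)) [Dy _] _] := T0_resolvent.
have AyK : rnorm (A y) <= K.
  rewrite /y iterS (A_resolvent T0_resolvent).
  apply: le_trans (ler_rnormD _ _) _; rewrite rnormN rnormZ.
  have C1x : rnorm (T0 (iter j T0 x)) <= C1.
    by apply: le_trans (hC1 x) _; rewrite ler_piMr.
  have C2x : rnorm (iter j T0 x) <= C2.
    by apply: le_trans (hC2 x) _; rewrite ler_piMr.
  by rewrite /K lerD // ler_wpM2l // Re_norm_ge0.
have := scaled_resolvent_dist (le_trans ler01 nu1) l1nu rTn Dy.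
rewrite rdistC /= -/y => dist_le; rewrite -(ler_pM2l (lt_le_trans ltr01 nu1)).
apply: le_trans dist_le (le_trans _ MK_le).
apply: le_trans (ler_wpM2r (rnorm_ge0 _) (ler_norm M)) _.
by rewrite ler_wpM2l.
Qed.

Lemma totally_bounded_op_iter {k} :
  (0 < k)%N -> totally_bounded_op (iter k T0) -> totally_bounded_op T0.
Proof.
case: k => // k _; elim: k => [|k IHk] // /totally_bounded_op_iter_pred.
exact: IHk.
Qed.

End LargeResolvents.

Theorem proposition3p2 (R : realType) (E : completeNormedModType R[i])
  (D : set E) (A : E -> E) :
  closed_operator D A ->
  (exists l0 : R, forall l : R, l0 <= l -> resolvent_set D A l%:C) ->
  (exists (M l1 : R), forall l : R, l1 <= l -> forall T : E -> E,
      is_resolvent D A l%:C T -> forall x : E, `|l%:C *: T x| <= M%:C * `|x|) ->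
  (exists (mu0 : R[i]) (T0 : E -> E) (k : nat),
      (1 <= k)%N /\ is_resolvent D A mu0 T0 /\ compact_operator (iter k T0)) ->
  forall (l : R[i]) (T : E -> E), is_resolvent D A l T -> compact_operator T.
Proof.
move=> _ [l0 rho_large] [M [l1 bound_large]].
move=> [mu0 [T0 [k [k_gt0 [rT0 cT0]]]]] l T rT.
have tbT0 : totally_bounded_op T0.
  apply: (totally_bounded_op_iter rho_large bound_large rT0 k_gt0).
  exact/compact_operatorE.
apply/compact_operatorE.
exact: (totally_bounded_op_resolvent rT0 rT (tbT0 : totally_bounded_op (T0 \o id))).
Qed.
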